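(* Let $\mathcal{H}$ be a Hilbert space, let $C\in\mathcal{B}(\mathcal{H})$ be similar to a contraction, and let $E\in\mathcal{B}(\mathcal{H})$ be a nilpotent operator such that $EC=0$. Then $T=C+E$ is similar to a contraction.
   Context: An operator $R\in\mathcal{B}(\mathcal{H})$ is similar to a contraction if there is an invertible $L\in\mathcal{B}(\mathcal{H})$ with $\|L^{-1}RL\|\le 1$. *)

From HB Require Import structures.
From mathcomp Require Import all_boot all_order all_algebra.
From mathcomp Require Import all_classical all_reals all_analysis.
From mathcomp Require Export complex.
Export numFieldNormedType.Exports.
Import Order.TTheory GRing.Theory Num.Theory.
Local Open Scope ring_scope.

Set Implicit Arguments.
Unset Strict Implicit.
Unset Printing Implicit Defensive.

(* ip is an inner product on the complex normed space H (linear in the first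
   argument, conjugate symmetric) inducing the norm of H: `|x|^2 = <x,x>.
   Together with completeness of H (a completeNormedModType) this makes
   (H, ip) a complex Hilbert space. *)
Definition is_hilbert_inner_product (R : realType) (H : completeNormedModType R[i])
    (ip : H -> H -> R[i]) : Prop :=
  [/\ (forall (a : R[i]) (x y z : H), ip (a *: x + y) z = a * ip x z + ip y z),
      (forall x y : H, ip y x = (ip x y)^*)
    & (forall x : H, `|x| ^+ 2 = ip x x)].

Definition bounded_op (R : realType) (H : completeNormedModType R[i]) (T : H -> H) : Prop :=
  (forall (a : R[i]) (x y : H), T (a *: x + y) = a *: T x + T y) /\ continuous T.

Definition is_contraction (R : realType) (H : completeNormedModType R[i]) (T : H -> H) : Prop :=
  forall x : H, `|T x| <= `|x|.

Definition similar_to_contraction (R : realType) (H : completeNormedModType R[i])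
    (T : H -> H) : Prop :=
  exists L Linv : H -> H,
    [/\ bounded_op L, bounded_op Linv,
        (forall x, L (Linv x) = x), (forall x, Linv (L x) = x)
      & is_contraction (fun x => Linv (T (L x)))].

Definition nilpotent_op (R : realType) (H : completeNormedModType R[i]) (E : H -> H) : Prop :=
  exists n : nat, forall x : H, iter n E x = 0.

(* Induction on the nilpotency index.  If E^2 = 0, EC = 0 and C is a
   contraction, let P be the orthogonal projection onto ker E, Q = 1 - P,
   B = CQ + E and t = 1/(1 + ||E||).  Since C + E maps H into ker E, the
   invertible operator L = P + tQ - tPC^*B satisfies
   L^-1 (C + E) L = CP + tB - CPC^*(tB), and the estimate
   ||Cu + w - CPC^*w||^2 <= ||u||^2 + ||w||^2 for u in ran P bounds its value at
   x by ||Px||^2 + t^2 ||Bx||^2 <= ||Px||^2 + ||Qx||^2 = ||x||^2.  If C is only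
   similar to a contraction, conjugate first.  If E^(n+2) = 0, let P' be the
   orthogonal projection onto ker E^(n+1): then EP' is nilpotent of order n+1
   and kills C, while E(1 - P') squares to zero and kills C + EP'. *)

From HB Require Import structures.
From Pilot Require Import Defs.
From mathcomp Require Import all_boot all_order all_algebra.
From mathcomp Require Import all_classical all_reals all_analysis.
From mathcomp Require Import ring lra.
Import Order.TTheory GRing.Theory Num.Theory.
Local Open Scope ring_scope.
Local Open Scope classical_set_scope.

Set Implicit Arguments.
Unset Strict Implicit.
Unset Printing Implicit Defensive.

Section LinearFun.
Variables (R : pzRingType) (U V : lmodType R) (f : U -> V).
Hypothesis f_lin : linear f.

Lemma lin0 : f 0 = 0.
Proof.
have := f_lin 1 0 0; rewrite !scale1r addr0 => f00.
by apply: (addrI (f 0)); rewrite addr0 -f00.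
Qed.

Lemma linD x y : f (x + y) = f x + f y.
Proof. by rewrite -[x]scale1r f_lin !scale1r. Qed.

Lemma linZ a x : f (a *: x) = a *: f x.
Proof. by rewrite -[a *: x]addr0 f_lin lin0 addr0. Qed.

Lemma linN x : f (- x) = - f x.
Proof. by rewrite -scaleN1r linZ scaleN1r. Qed.

Lemma linB x y : f (x - y) = f x - f y.
Proof. by rewrite linD linN. Qed.

End LinearFun.

Section RealNorm.
Variables (R : realType) (V : normedModType R[i]).
Implicit Types (x y : V).

Definition nrm x : R := complex.Re `|x|.

Lemma nrmE x : `|x| = (nrm x)%:C%C.
Proof. by rewrite /nrm RRe_real // normr_real. Qed.

Lemma nrm_ge0 x : 0 <= nrm x.
Proof. by rewrite -ler0c -nrmE. Qed.

Lemma nrm_eq0 x : (nrm x == 0) = (x == 0).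
Proof. by rewrite -(normr_eq0 x) nrmE -(inj_eq (@complexI R)). Qed.

Lemma nrm0 : nrm (0 : V) = 0.
Proof. by rewrite /nrm normr0. Qed.

Lemma nrmN x : nrm (- x) = nrm x.
Proof. by rewrite /nrm normrN. Qed.

Lemma ler_nrmD x y : nrm (x + y) <= nrm x + nrm y.
Proof. by rewrite -lecR rmorphD /= -!nrmE ler_normD. Qed.

Lemma nrmZ (t : R) x : 0 <= t -> nrm (t%:C%C *: x) = t * nrm x.
Proof. by move=> t0; rewrite /nrm normrZ ger0_norm ?ler0c // nrmE -rmorphM. Qed.

End RealNorm.

Section BoundedLinear.
Variables (R : realType) (U V : normedModType R[i]) (f : U -> V).
Hypothesis f_lin : linear f.

Let lf : {linear U -> V} :=
  HB.pack_for {linear U -> V} f (GRing.isLinear.Build R[i] U V *:%R f f_lin).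

Lemma linear_nrm_bounded : continuous f ->
  exists2 M : R, 0 <= M & forall x, nrm (f x) <= M * nrm x.
Proof.
move=> fc; have [k k0 fk] := @linear_lipschitz _ _ _ lf fc.
have kE : (complex.Re k)%:C%C = k by rewrite RRe_real ?gtr0_real.
exists (complex.Re k); first by rewrite -ler0c kE ltW.
by move=> x; rewrite -lecR rmorphM /= kE -!nrmE.
Qed.

Lemma nrm_bounded_continuous (M : R) : 0 <= M ->
  (forall x, nrm (f x) <= M * nrm x) -> continuous f.
Proof.
move=> M0 fM; apply: (@bounded_linear_continuous _ _ _ lf); apply/ex_bound.
exists M%:C%C; near=> x; rewrite /= nrmE -[leRHS]mulr1 -rmorphM lecR.
apply: (le_trans (fM x)); apply: ler_wpM2l => //; rewrite -lecR -nrmE.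
by near: x; apply: nbhs0_le; rewrite ltr01.
Unshelve. all: by end_near. Qed.

End BoundedLinear.

Section BoundedOp.
Variables (R : realType) (H : completeNormedModType R[i]).
Implicit Types (S T : H -> H).

Lemma bounded_op_id : bounded_op (fun x : H => x).
Proof. by split=> // x; exact: cvg_id. Qed.

Lemma bounded_op_comp S T :
  bounded_op S -> bounded_op T -> bounded_op (fun x => T (S x)).
Proof.
move=> [Sl Sc] [Tl Tc]; split=> [a x y|x]; first by rewrite Sl Tl.
exact: continuous_comp (Sc x) (Tc (S x)).
Qed.

Lemma bounded_op_add S T :
  bounded_op S -> bounded_op T -> bounded_op (fun x => S x + T x).
Proof.
move=> [Sl Sc] [Tl Tc]; split=> [a x y|x]; first by rewrite Sl Tl scalerDr addrACA.
exact: cvgD (Sc x) (Tc x).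
Qed.

Lemma bounded_op_opp S : bounded_op S -> bounded_op (fun x => - S x).
Proof.
by move=> [Sl Sc]; split=> [a x y|x]; [rewrite Sl opprD scalerN | exact: cvgN (Sc x)].
Qed.

Lemma bounded_op_scale a S : bounded_op S -> bounded_op (fun x => a *: S x).
Proof.
move=> [Sl Sc]; split=> [b x y|x]; last exact: cvgZr (Sc x).
by rewrite Sl scalerDr !scalerA mulrC.
Qed.

Lemma bounded_op_iter n T : bounded_op T -> bounded_op (iter n T).
Proof.
move=> Tb; elim: n => [|n IH]; first exact: bounded_op_id.
exact: bounded_op_comp IH Tb.
Qed.

Lemma similar_to_contraction_conj (T L Li : H -> H) :
  bounded_op L -> bounded_op Li ->
  (forall x, L (Li x) = x) -> (forall x, Li (L x) = x) ->
  similar_to_contraction (fun x => Li (T (L x))) -> similar_to_contraction T.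
Proof.
move=> Lb Lib LLi LiL [L1 [Li1 [L1b Li1b L1Li1 Li1L1 contr]]].
exists (fun x => L (L1 x)), (fun x => Li1 (Li x)); split.
- exact: bounded_op_comp.
- exact: bounded_op_comp.
- by move=> x; rewrite L1Li1 LLi.
- by move=> x; rewrite LiL Li1L1.
- exact: contr.
Qed.

End BoundedOp.

Section InnerProduct.
Variables (R : realType) (H : completeNormedModType R[i]) (ip : H -> H -> R[i]).
Hypothesis ip_hilbert : is_hilbert_inner_product ip.
Implicit Types (x y z u v w : H).

Lemma ipDZl a x y z : ip (a *: x + y) z = a * ip x z + ip y z.
Proof. by case: ip_hilbert. Qed.

Lemma ipC x y : ip y x = (ip x y)^*.
Proof. by case: ip_hilbert. Qed.

Lemma ipxx x : ip x x = (nrm x ^+ 2)%:C%C.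
Proof. by case: ip_hilbert => _ _ <-; rewrite nrmE rmorphXn. Qed.

Lemma ip_linearl z : linear (fun x => ip x z : R[i]^o).
Proof. by move=> a x y; rewrite ipDZl. Qed.

Lemma ipDl x y z : ip (x + y) z = ip x z + ip y z.
Proof. exact: (linD (ip_linearl z)). Qed.

Lemma ipZl a x z : ip (a *: x) z = a * ip x z.
Proof. exact: (linZ (ip_linearl z)). Qed.

Lemma ip0l z : ip 0 z = 0.
Proof. exact: (lin0 (ip_linearl z)). Qed.

Lemma ipNl x z : ip (- x) z = - ip x z.
Proof. exact: (linN (ip_linearl z)). Qed.

Lemma ipBl x y z : ip (x - y) z = ip x z - ip y z.
Proof. exact: (linB (ip_linearl z)). Qed.

Lemma ipDr x y z : ip z (x + y) = ip z x + ip z y.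
Proof. by rewrite ipC ipDl rmorphD /= -!ipC. Qed.

Lemma ipZr a x z : ip z (a *: x) = a^* * ip z x.
Proof. by rewrite ipC ipZl rmorphM /= -ipC. Qed.

Lemma ip0r z : ip z 0 = 0.
Proof. by rewrite ipC ip0l conjC0. Qed.

Lemma ipNr x z : ip z (- x) = - ip z x.
Proof. by rewrite ipC ipNl rmorphN /= -ipC. Qed.

Lemma ipBr x y z : ip z (x - y) = ip z x - ip z y.
Proof. by rewrite ipDr ipNr. Qed.

Lemma ipxx_eq0 x : ip x x = 0 -> x = 0.
Proof.
by rewrite ipxx => /(congr1 (@complex.Re R))/eqP; rewrite sqrf_eq0 nrm_eq0 => /eqP.
Qed.

Lemma ip_sepr u v : (forall x, ip x u = ip x v) -> u = v.
Proof.
by move=> uv; apply/eqP; rewrite -subr_eq0; apply/eqP/ipxx_eq0; rewrite ipBr uv subrr.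
Qed.

Ltac ip_ring := apply: ip_sepr => ?; rewrite ?(ipDr, ipNr, ipZr, ip0r); ring.

Definition rip x y : R := complex.Re (ip x y).

Lemma ripC x y : rip y x = rip x y.
Proof. by rewrite /rip ipC; case: (ip x y). Qed.

Lemma ripDl x y z : rip (x + y) z = rip x z + rip y z.
Proof. by rewrite /rip ipDl; case: (ip x z); case: (ip y z). Qed.

Lemma ripNl x z : rip (- x) z = - rip x z.
Proof. by rewrite /rip ipNl; case: (ip x z). Qed.

Lemma ripZl (t : R) x z : rip (t%:C%C *: x) z = t * rip x z.
Proof. by rewrite /rip ipZl; case: (ip x z) => a b /=; ring. Qed.

Lemma ripDr x y z : rip z (x + y) = rip z x + rip z y.
Proof. by rewrite ripC ripDl !(ripC z). Qed.

Lemma ripNr x z : rip z (- x) = - rip z x.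
Proof. by rewrite ripC ripNl ripC. Qed.

Lemma ripZr (t : R) x z : rip z (t%:C%C *: x) = t * rip z x.
Proof. by rewrite ripC ripZl ripC. Qed.

Lemma rip0r z : rip z 0 = 0.
Proof. by rewrite /rip ip0r. Qed.

Lemma ripxx x : rip x x = nrm x ^+ 2.
Proof. by rewrite /rip ipxx. Qed.

Lemma ip_eq0_rip w m : (forall a, rip w (a *: m) = 0) -> ip w m = 0.
Proof.
move=> w_m; have := w_m (ip w m); rewrite /rip ipZr mulrC -normCK => re0.
have : `|ip w m| ^+ 2 = 0 by rewrite -[LHS]RRe_real ?realX ?normr_real // re0.
by move/eqP; rewrite sqrf_eq0 normr_eq0 => /eqP.
Qed.

Lemma nrmD2 x y : nrm (x + y) ^+ 2 = nrm x ^+ 2 + nrm y ^+ 2 + 2 * rip x y.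
Proof. by rewrite -!ripxx !ripDl !ripDr (ripC y x); ring. Qed.

Lemma nrmB2 x y : nrm (x - y) ^+ 2 = nrm x ^+ 2 + nrm y ^+ 2 - 2 * rip x y.
Proof. by rewrite nrmD2 nrmN ripNr; ring. Qed.

Lemma nrmZ2 (t : R) x : nrm (t%:C%C *: x) ^+ 2 = t ^+ 2 * nrm x ^+ 2.
Proof. by rewrite -!ripxx ripZl ripZr mulrA -expr2. Qed.

Lemma rip_le x y : rip x y <= nrm x * nrm y.
Proof.
have [x0|x0] := eqVneq x 0; first by rewrite x0 /rip ip0l nrm0 mul0r.
have [y0|y0] := eqVneq y 0; first by rewrite y0 rip0r nrm0 mulr0.
have p0 : 0 < nrm x * nrm y.
  by rewrite mulr_gt0 // lt_def nrm_ge0 nrm_eq0 ?x0 ?y0.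
have := nrmB2 ((nrm y)%:C%C *: x) ((nrm x)%:C%C *: y).
rewrite !nrmZ2 ripZl ripZr => h.
have := sqr_ge0 (nrm ((nrm y)%:C%C *: x - (nrm x)%:C%C *: y)).
by rewrite h; nra.
Qed.

Lemma ip_nrm_le x z : nrm (ip x z : R[i]^o) <= nrm x * nrm z.
Proof.
set c := ip x z; have [->|c0] := eqVneq c 0.
  by rewrite nrm0 mulr_ge0 ?nrm_ge0.
pose u := c^* / `|c|.
have u1 : `|u| = 1 by rewrite /u normrM normfV norm_conjC normr_id mulfV ?normr_eq0.
have uc : ip (u *: x) z = `|c|.
  by rewrite ipZl -/c mulrAC [c^* * c]mulrC -normCK expr2 mulfK ?normr_eq0.
have ux : nrm (u *: x) = nrm x by rewrite /nrm normrZ u1 mul1r.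
by have := rip_le (u *: x) z; rewrite /rip uc ux.
Qed.

Lemma ip_continuousl z : continuous (fun x => ip x z : R[i]^o).
Proof.
apply: (nrm_bounded_continuous (ip_linearl z) (nrm_ge0 z)) => x.
by rewrite mulrC ip_nrm_le.
Qed.

Definition closed_subspace (K : set H) :=
  [/\ K 0, (forall u v, K u -> K v -> K (u + v)),
      (forall a u, K u -> K (a *: u)) & closed K].

Lemma closed_subspace_ker (V : normedModType R[i]) (g : H -> V) :
  linear g -> continuous g -> closed_subspace [set x | g x = 0].
Proof.
move=> gl gc; split=> /=.
- exact: lin0 gl.
- by move=> u v gu gv; rewrite (linD gl) gu gv addr0.
- by move=> a u gu; rewrite (linZ gl) gu scaler0.
- apply: (@preimage_closed _ _ g [set 0] (fun x _ => gc x)).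
  exact: (@accessible_closed_set1 V (hausdorff_accessible (@norm_hausdorff _ V)) 0).
Qed.

Section ClosedSubspace.
Variable K : set H.
Hypothesis K_sub : closed_subspace K.

Section DistanceMinimizer.
Variable x : H.

Let dK := inf [set nrm (x - m) | m in K].

Let has_inf_dK : has_inf [set nrm (x - m) | m in K].
Proof.
case: K_sub => K0 _ _ _; split; first by exists (nrm (x - 0)), 0.
by exists 0 => _ [m _ <-]; exact: nrm_ge0.
Qed.

Let dK_le m : K m -> dK <= nrm (x - m).
Proof. by move=> Km; apply: ge_inf; [case: has_inf_dK | exists m]. Qed.

Let dK_ge0 : 0 <= dK.
Proof.
by case: has_inf_dK => ne _; apply: lb_le_inf => // _ [m _ <-]; exact: nrm_ge0.
Qed.

Let dK_parallelogram m1 m2 : K m1 -> K m2 ->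
  nrm (m1 - m2) ^+ 2 + 4 * dK ^+ 2 <= 2 * nrm (x - m1) ^+ 2 + 2 * nrm (x - m2) ^+ 2.
Proof.
case: K_sub => _ KD KZ _ K1 K2; set w := x - 2^-1 *: (m1 + m2).
have dw : dK ^+ 2 <= nrm w ^+ 2.
  by rewrite ler_pXn2r ?nnegrE ?nrm_ge0 // dK_le //; apply/KZ/KD.
have half : (2^-1 + 2^-1 : R[i]) = 1 by rewrite [RHS]splitr mul1r.
have ww : w + w = (x - m1) + (x - m2).
  by rewrite addrACA -opprD -scalerDl half scale1r opprD addrACA.
have S : nrm (w + w) ^+ 2 = 4 * nrm w ^+ 2 by rewrite nrmD2 ripxx; ring.
have D : (x - m1) - (x - m2) = - (m1 - m2) by ip_ring.
have := nrmD2 (x - m1) (x - m2); have := nrmB2 (x - m1) (x - m2).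
by rewrite -ww S D nrmN; lra.
Qed.

Let minimizing_cauchy (ms : nat -> H) : (forall k, K (ms k)) ->
  (forall k, nrm (x - ms k) < dK + k.+1%:R^-1) -> cauchy (ms @ \oo).
Proof.
move=> Kms ms_lt; apply/cauchy_ballP => e e0; have d0 := dK_ge0.
have eE : (complex.Re e)%:C%C = e by rewrite RRe_real ?gtr0_real.
have r0 : 0 < complex.Re e by rewrite -ltcR eE.
set r := complex.Re e in eE r0.
have c0 : 0 < r ^+ 2 / 4 / (2 * dK + 1) by rewrite !divr_gt0 ?exprn_gt0 //; lra.
have ms_sq : \forall k \near \oo,
    K (ms k) /\ nrm (x - ms k) ^+ 2 < dK ^+ 2 + r ^+ 2 / 4.
  near=> k; split=> //.
  have k1 : k.+1%:R^-1 <= 1 :> R by rewrite invf_le1 ?ler1n.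
  have : k.+1%:R^-1 < r ^+ 2 / 4 / (2 * dK + 1).
    by near: k; exact: near_infty_natSinv_lt (PosNum c0).
  have := dK_le (Kms k); have := ms_lt k.
  move: k1 (invr_ge0 (k.+1%:R : R)); rewrite ler0n ltr_pdivlMr; last lra.
  set a := nrm _; set eps := _^-1 => k1 eps0 a_lt d_le eps_lt.
  have h1 : (a - dK) * (a + dK) <= eps * (a + dK) by apply: ler_wpM2r; lra.
  have h2 : eps * (a + dK) <= eps * (2 * dK + 1) by apply: ler_wpM2l; lra.
  nra.
near=> y z; rewrite -ball_normE /= -eE nrmE ltcR.
have [Ky hy] : K y /\ nrm (x - y) ^+ 2 < dK ^+ 2 + r ^+ 2 / 4 by near: y.
have [Kz hz] : K z /\ nrm (x - z) ^+ 2 < dK ^+ 2 + r ^+ 2 / 4 by near: z.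
have := dK_parallelogram Ky Kz; have := nrm_ge0 (y - z); nra.
Unshelve. all: by end_near. Qed.

Lemma closed_subspace_minimizer :
  exists2 p, K p & forall m, K m -> nrm (x - p) <= nrm (x - m).
Proof.
have near_dK k : exists m, K m /\ nrm (x - m) < dK + k.+1%:R^-1.
  have k0 : 0 < k.+1%:R^-1 :> R by rewrite invr_gt0 ltr0Sn.
  by have [_ [m Km <-]] := inf_adherent k0 has_inf_dK; exists m.
have [ms ms_min] := choice near_dK.
have ms_cvg : ms @ \oo --> lim (ms @ \oo).
  by apply: cauchy_cvg; apply: minimizing_cauchy => k; case: (ms_min k).
set p := lim (ms @ \oo) in ms_cvg; exists p.
  case: K_sub => _ _ _ Kcl; apply: (closed_cvg K Kcl _ _ ms_cvg).
  by apply: nearW => k; case: (ms_min k).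
move=> m Km; apply: le_trans (dK_le Km); apply/ler_addgt0Pr => e e0.
have e2 : 0 < e / 2 by rewrite divr_gt0.
have e2c : 0 < (e / 2)%:C%C by rewrite ltcR.
near \oo => k.
have h1 : nrm (x - ms k) < dK + e / 2.
  apply: (lt_trans (ms_min k).2); rewrite ltrD2l.
  by near: k; exact: near_infty_natSinv_lt (PosNum e2).
have h2 : nrm (ms k - p) < e / 2.
  rewrite -nrmN opprB -ltcR -nrmE; near: k.
  exact: (cvgrPdist_lt _ _).1 ms_cvg _ e2c.
by have := ler_nrmD (x - ms k) (ms k - p); rewrite addrA subrK; lra.
Unshelve. all: by end_near. Qed.

End DistanceMinimizer.

Lemma minimizer_orthogonal w :
  (forall m, K m -> nrm w <= nrm (w - m)) -> forall m, K m -> ip w m = 0.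
Proof.
move=> w_min m Km; apply: ip_eq0_rip => a.
case: K_sub => _ _ KZ _; have {}Km := KZ a _ Km.
set m' := a *: m in Km *; set c := rip w m'; set b := nrm m' ^+ 2.
have b0 : 0 <= b by rewrite exprn_ge0 ?nrm_ge0.
set s := c / (b + 1); have cs : c = s * (b + 1) by rewrite divfK // gt_eqF //; lra.
have sq : nrm w ^+ 2 <= nrm (w - s%:C%C *: m') ^+ 2.
  by rewrite ler_pXn2r ?nnegrE ?nrm_ge0 //; apply/w_min/KZ.
rewrite nrmB2 nrmZ2 ripZr -/c -/b cs in sq.
have s0 : s = 0 by apply/eqP; rewrite -sqrf_eq0 eq_le sqr_ge0 andbT; nra.
by rewrite cs s0 mul0r.
Qed.

Lemma orthogonal_projection_ex : exists P : H -> H,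
  (forall x, K (P x)) /\ (forall x m, K m -> ip (x - P x) m = 0).
Proof.
have proj_x x : exists p, K p /\ forall m, K m -> ip (x - p) m = 0.
  have [p Kp p_min] := closed_subspace_minimizer x.
  exists p; split=> //; apply: minimizer_orthogonal => m Km.
  case: K_sub => _ KD _ _; rewrite -addrA -opprD; exact/p_min/KD.
have [P PK] := choice proj_x.
by exists P; split=> x; case: (PK x).
Qed.

End ClosedSubspace.

Section OrthogonalProjection.
Variables (K : set H) (P : H -> H).
Hypotheses (K_sub : closed_subspace K) (PK : forall x, K (P x))
  (P_orth : forall x m, K m -> ip (x - P x) m = 0).

Let KB u v : K u -> K v -> K (u - v).
Proof. by case: K_sub => _ KD KZ _ Ku Kv; rewrite -scaleN1r; apply/KD/KZ. Qed.

Lemma ip_proj z m : K m -> ip (P z) m = ip z m.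
Proof. by move=> Km; apply/eqP; rewrite eq_sym -subr_eq0 -ipBl P_orth. Qed.

Lemma proj_id m : K m -> P m = m.
Proof.
move=> Km; apply/eqP; rewrite eq_sym -subr_eq0; apply/eqP/ipxx_eq0.
by rewrite P_orth //; exact: KB.
Qed.

Lemma proj_idem x : P (P x) = P x.
Proof. exact: proj_id. Qed.

Lemma proj_sym x y : ip (P x) y = ip x (P y).
Proof.
have /eqP : ip (P x) (y - P y) = 0 by rewrite ipC P_orth // conjC0.
by rewrite -(ip_proj x (PK y)) ipBr subr_eq0 => /eqP.
Qed.

Lemma proj_linear : linear P.
Proof.
case: K_sub => _ KD KZ _ a x y; apply/eqP; rewrite -subr_eq0; apply/eqP/ipxx_eq0.
have Kd : K (P (a *: x + y) - (a *: P x + P y)) by apply/KB/KD/PK/KZ.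
by rewrite ipBl ipDl ipZl !ip_proj // ipDZl subrr.
Qed.

Lemma proj_pythagoras x : nrm x ^+ 2 = nrm (P x) ^+ 2 + nrm (x - P x) ^+ 2.
Proof.
have := nrmD2 (P x) (x - P x); rewrite addrC subrK => ->.
by rewrite ripC /rip P_orth // mulr0 addr0.
Qed.

Lemma nrm_proj_le x : nrm (P x) <= nrm x.
Proof.
rewrite -(ler_pXn2r (_ : 0 < 2)%N) ?nnegrE ?nrm_ge0 //.
by rewrite (proj_pythagoras x) lerDl sqr_ge0.
Qed.

Lemma proj_bounded : bounded_op P.
Proof.
split; first exact: proj_linear.
apply: (nrm_bounded_continuous proj_linear ler01) => x; rewrite mul1r.
exact: nrm_proj_le.
Qed.

End OrthogonalProjection.

Lemma riesz_representation (f : H -> R[i]^o) :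
  linear f -> continuous f -> exists z, forall x, f x = ip x z.
Proof.
move=> fl fc; have Kf := closed_subspace_ker fl fc.
have [[x0 fx0]|f0] := pselect (exists x0, f x0 != 0); last first.
  by exists 0 => x; rewrite ip0r; apply: contra_notP f0 => fx; exists x; apply/eqP.
have [P [PK P_orth]] := orthogonal_projection_ex Kf.
set w := x0 - P x0.
have fw : f w = f x0 by rewrite (linB fl) PK subr0.
have ww : ip w w != 0 by apply: contraNneq fx0 => /ipxx_eq0 w0; rewrite -fw w0 lin0.
exists ((f w / ip w w)^* *: w) => x; rewrite ipZr conjCK.
have fu : f (f x *: w - f w *: x) = 0.
  by rewrite (linB fl) !(linZ fl) /GRing.scale /= mulrC subrr.
have /eqP : ip (f x *: w - f w *: x) w = 0 by rewrite ipC P_orth // conjC0.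
rewrite ipBl !ipZl subr_eq0 => /eqP fxw.
by apply: (mulIf ww); rewrite fxw; field.
Qed.

Lemma adjoint_ex (C : H -> H) : bounded_op C ->
  exists Cs : H -> H, bounded_op Cs /\ forall x y, ip (C x) y = ip x (Cs y).
Proof.
move=> [Cl Cc]; have [M M0 CM] := linear_nrm_bounded Cl Cc.
have rep y : exists z, forall x, ip (C x) y = ip x z.
  apply: (@riesz_representation (fun x => ip (C x) y : R[i]^o)).
    by move=> a x x'; rewrite /= Cl ipDZl.
  by move=> x; exact: (continuous_comp (Cc x) (@ip_continuousl y (C x))).
have [Cs CsE] := choice rep.
have Csl : linear Cs.
  by move=> a y y'; apply: ip_sepr => x; rewrite -CsE ipDr ipZr ipDr ipZr !CsE.
have CsM y : nrm (Cs y) <= M * nrm y.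
  have : nrm (Cs y) ^+ 2 <= M * nrm (Cs y) * nrm y.
    rewrite -ripxx /rip -CsE; apply: le_trans (rip_le _ _) _.
    by rewrite ler_wpM2r ?nrm_ge0 ?CM.
  have := mulr_ge0 M0 (nrm_ge0 y); have := nrm_ge0 (Cs y); nra.
by exists Cs; split=> //; split=> //; exact: (nrm_bounded_continuous Csl M0 CsM).
Qed.

Lemma contraction_compression_le (C Cs P : H -> H) :
  linear C -> linear P -> (forall x, P (P x) = P x) ->
  (forall x y, ip (P x) y = ip x (P y)) -> (forall x, nrm (C x) <= nrm x) ->
  (forall x y, ip (C x) y = ip x (Cs y)) ->
  forall u w, P u = u -> nrm (C u + w - C (P (Cs w))) ^+ 2 <= nrm u ^+ 2 + nrm w ^+ 2.
Proof.
move=> Cl Pl PP Psym C_contr CsE u w Pu.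
set v := P (Cs w); set z := u - v.
have Pz : P z = z by rewrite /z (linB Pl) Pu PP.
have -> : C u + w - C v = C z + w by rewrite /z (linB Cl); ip_ring.
(* [v] represents [x |-> rip (C x) w] on the range of [P]. *)
have Czw : rip (C z) w = rip z v by rewrite /rip CsE -{1}Pz Psym.
have u2 : nrm u ^+ 2 = nrm z ^+ 2 + nrm v ^+ 2 + 2 * rip z v.
  by rewrite -nrmD2 /z subrK.
have Cz2 : nrm (C z) ^+ 2 <= nrm z ^+ 2 by rewrite ler_pXn2r ?nnegrE ?nrm_ge0.
by rewrite nrmD2 Czw u2; have := sqr_ge0 (nrm v); lra.
Qed.

Section SquareZero.
Variables (C Cs E P : H -> H) (kE : R).
Hypotheses (C_bounded : bounded_op C) (C_contr : forall x, nrm (C x) <= nrm x)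
  (CsE : forall x y, ip (C x) y = ip x (Cs y)) (Cs_bounded : bounded_op Cs)
  (E_bounded : bounded_op E) (EE : forall x, E (E x) = 0)
  (EC : forall x, E (C x) = 0)
  (kE_ge0 : 0 <= kE) (E_le : forall x, nrm (E x) <= kE * nrm x)
  (PK : forall x, E (P x) = 0) (P_orth : forall x m, E m = 0 -> ip (x - P x) m = 0).

Let Cl := proj1 C_bounded.
Let Csl := proj1 Cs_bounded.
Let El := proj1 E_bounded.
Let Ksub : closed_subspace [set x | E x = 0] :=
  closed_subspace_ker El (proj2 E_bounded).
Let P_bounded : bounded_op P := proj_bounded Ksub PK P_orth.
Let Pl := proj1 P_bounded.
Let PP x : P (P x) = P x := proj_idem Ksub PK P_orth x.
Let P_id y : E y = 0 -> P y = y := @proj_id _ _ Ksub PK P_orth y.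

Let t : R := (1 + kE)^-1.
Let t_gt0 : 0 < t. Proof. by rewrite /t invr_gt0 ltr_wpDr. Qed.
Let tc_neq0 : t%:C%C != 0. Proof. by rewrite gt_eqF // ltcR. Qed.

Let Q x := x - P x.
Let B x := C (Q x) + E x.
Let X x := P (Cs (B x)).
Let L x := P x + t%:C%C *: Q x - t%:C%C *: X x.
Let Li y := P (y + X y) + (t%:C%C)^-1 *: Q (y + X y).

Let Q_bounded : bounded_op Q :=
  bounded_op_add (bounded_op_id H) (bounded_op_opp P_bounded).
Let B_bounded : bounded_op B :=
  bounded_op_add (bounded_op_comp Q_bounded C_bounded) E_bounded.
Let X_bounded : bounded_op X :=
  bounded_op_comp B_bounded (bounded_op_comp Cs_bounded P_bounded).
Let Ql := proj1 Q_bounded.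
Let Xl := proj1 X_bounded.

Let L_bounded : bounded_op L :=
  bounded_op_add (bounded_op_add P_bounded (bounded_op_scale _ Q_bounded))
    (bounded_op_opp (bounded_op_scale _ X_bounded)).

Let Li_bounded : bounded_op Li.
Proof.
have Yb : bounded_op (fun y => y + X y) := bounded_op_add (bounded_op_id H) X_bounded.
exact: bounded_op_add (bounded_op_comp Yb P_bounded)
  (bounded_op_scale _ (bounded_op_comp Yb Q_bounded)).
Qed.

Let QP x : Q (P x) = 0. Proof. by rewrite /Q PP subrr. Qed.
Let PQ x : P (Q x) = 0. Proof. by rewrite /Q (linB Pl) PP subrr. Qed.
Let QQ x : Q (Q x) = Q x. Proof. by rewrite {1}/Q PQ subr0. Qed.
Let EQ x : E (Q x) = E x. Proof. by rewrite /Q (linB El) PK subr0. Qed.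
Let XP x : X (P x) = 0.
Proof. by rewrite /X /B QP (lin0 Cl) PK addr0 (lin0 Csl) (lin0 Pl). Qed.
Let XQ x : X (Q x) = X x. Proof. by rewrite /X /B QQ EQ. Qed.
Let PX x : P (X x) = X x := PP _.
Let QX x : Q (X x) = 0 := QP _.
Let XX x : X (X x) = 0 := XP _.

Let LiL x : Li (L x) = x.
Proof.
have XL : X (L x) = t%:C%C *: X x.
  by rewrite /L (linB Xl) (linD Xl) !(linZ Xl) XP XQ XX scaler0 subr0 add0r.
rewrite /Li XL /L subrK (linD Pl) (linZ Pl) PP PQ (linD Ql) (linZ Ql) QP QQ.
by rewrite scaler0 addr0 add0r scalerA mulVf ?tc_neq0 // scale1r /Q addrC subrK.
Qed.

Let LLi y : L (Li y) = y.
Proof.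
have eLi : Li y = P y + X y + (t%:C%C)^-1 *: Q y.
  by rewrite /Li (linD Pl) PX (linD Ql) QX addr0.
rewrite eLi /L !(linD Pl) (linZ Pl) PP PX PQ !(linD Ql) (linZ Ql) QP QX QQ.
rewrite !(linD Xl) (linZ Xl) XP XX XQ.
by rewrite scaler0 !add0r addr0 !scalerA mulfV ?tc_neq0 // !scale1r /Q; ip_ring.
Qed.

Let Li_id y : E y = 0 -> Li y = y.
Proof.
move=> Ey; have Py := P_id Ey.
have Qy : Q y = 0 by rewrite /Q Py subrr.
have Xy : X y = 0 by rewrite /X /B Qy (lin0 Cl) Ey addr0 (lin0 Csl) (lin0 Pl).
by rewrite /Li Xy addr0 Py Qy scaler0 addr0.
Qed.

Let TL x : C (L x) + E (L x) = C (P x) + t%:C%C *: B x - C (P (Cs (t%:C%C *: B x))).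
Proof.
rewrite (linZ Csl) (linZ Pl) (linZ Cl) /L /X /B /Q.
rewrite !(linD Cl, linN Cl, linZ Cl) !(linD El, linN El, linZ El) !PK.
by ip_ring.
Qed.

Let tB_le x : t * nrm (B x) <= nrm (Q x).
Proof.
have B_le : nrm (B x) <= (1 + kE) * nrm (Q x).
  rewrite /B -EQ; apply: le_trans (ler_nrmD _ _) _.
  by have := C_contr (Q x); have := E_le (Q x); lra.
have tK : t * (1 + kE) = 1 by rewrite /t mulVf // gt_eqF // -invr_gt0.
by rewrite -[leRHS]mul1r -tK -mulrA; apply: ler_wpM2l B_le; exact: ltW.
Qed.

Lemma square_zero_similar_proj : similar_to_contraction (fun x => C x + E x).
Proof.
exists L, Li; split=> [||||x];
  [exact: L_bounded | exact: Li_bounded | exact: LLi | exact: LiL |].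
rewrite Li_id; last by rewrite (linD El) EC EE addr0.
rewrite TL !nrmE lecR -(ler_pXn2r (_ : 0 < 2)%N) ?nnegrE ?nrm_ge0 //.
have Psym := proj_sym PK P_orth.
apply: le_trans (contraction_compression_le Cl Pl PP Psym C_contr CsE _ (PP x)) _.
have t0 := ltW t_gt0.
rewrite (proj_pythagoras PK P_orth x) lerD2l nrmZ //.
by rewrite ler_pXn2r ?nnegrE ?mulr_ge0 ?nrm_ge0 // tB_le.
Qed.

End SquareZero.

Lemma contraction_square_zero_similar (C E : H -> H) :
  bounded_op C -> Defs.is_contraction C -> bounded_op E ->
  (forall x, E (E x) = 0) -> (forall x, E (C x) = 0) ->
  similar_to_contraction (fun x => C x + E x).
Proof.
move=> Cb C_contr Eb EE EC.
have C_le x : nrm (C x) <= nrm x by rewrite -lecR -!nrmE.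
have [Cs [Csb CsE]] := adjoint_ex Cb.
have [kE kE0 E_le] := linear_nrm_bounded (proj1 Eb) (proj2 Eb).
have Ksub := closed_subspace_ker (proj1 Eb) (proj2 Eb).
have [P [PK P_orth]] := orthogonal_projection_ex Ksub.
exact: square_zero_similar_proj Cb C_le CsE Csb Eb EE EC kE0 E_le PK P_orth.
Qed.

Lemma square_zero_similar_to_contraction (C E : H -> H) :
  bounded_op C -> similar_to_contraction C -> bounded_op E ->
  (forall x, E (E x) = 0) -> (forall x, E (C x) = 0) ->
  similar_to_contraction (fun x => C x + E x).
Proof.
move=> Cb [L [Li [Lb Lib LLi LiL contr]]] Eb EE EC.
apply: (similar_to_contraction_conj Lb Lib LLi LiL) => /=.
have Lil := proj1 Lib.
have -> : (fun x => Li (C (L x) + E (L x))) = (fun x => Li (C (L x)) + Li (E (L x))).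
  by apply: funext => x; rewrite (linD Lil).
apply: contraction_square_zero_similar => //.
- exact: bounded_op_comp (bounded_op_comp Lb Cb) Lib.
- exact: bounded_op_comp (bounded_op_comp Lb Eb) Lib.
- by move=> x; rewrite LLi EE (lin0 Lil).
- by move=> x; rewrite LLi EC (lin0 Lil).
Qed.

Lemma nilpotent_split n (E : H -> H) :
  bounded_op E -> (forall x, iter n.+2 E x = 0) ->
  exists E1 E2 : H -> H, [/\ bounded_op E1 /\ bounded_op E2,
    (forall x, E x = E1 x + E2 x), (forall x, iter n.+1 E1 x = 0),
    (forall x, E2 (E1 x) = 0 /\ E2 (E2 x) = 0) &
    (forall x, iter n.+1 E x = 0 -> E1 x = E x /\ E2 x = 0)].
Proof.
move=> Eb En; have El := proj1 Eb; set g := iter n.+1 E.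
have [gl gc] : bounded_op g := bounded_op_iter n.+1 Eb.
have Ksub := closed_subspace_ker gl gc.
have [P [PK P_orth]] := orthogonal_projection_ex Ksub.
have P_id y : g y = 0 -> P y = y := @proj_id _ _ Ksub PK P_orth y.
have Pb := proj_bounded Ksub PK P_orth.
have gE x : g (E x) = 0 by rewrite /g -iterSr.
have E2_ker y : g y = 0 -> E (y - P y) = 0 by move=> gy; rewrite P_id ?subrr ?(lin0 El).
have iter_ker k y : g y = 0 -> iter k (fun x => E (P x)) y = iter k E y.
  move=> gy; elim: k => [|k IH] //; rewrite !iterS IH P_id //.
  by case: k {IH} => [|k] //; rewrite iterS.
exists (fun x => E (P x)), (fun x => E (x - P x)); split.
- split; first exact: bounded_op_comp Pb Eb.
  exact: bounded_op_comp (bounded_op_add (bounded_op_id H) (bounded_op_opp Pb)) Eb.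
- by move=> x; rewrite (linB El) addrC subrK.
- by move=> x; rewrite iterSr iter_ker ?gE // -iterSr; exact: PK.
- by move=> x; split; apply/E2_ker/gE.
- by move=> y gy; rewrite P_id // subrr (lin0 El).
Qed.

Lemma nilpotent_similar_to_contraction n (C E : H -> H) :
  bounded_op C -> similar_to_contraction C -> bounded_op E ->
  (forall x, iter n.+1 E x = 0) -> (forall x, E (C x) = 0) ->
  similar_to_contraction (fun x => C x + E x).
Proof.
elim: n C E => [|n IH] C E Cb C_sim Eb En EC.
  by apply: square_zero_similar_to_contraction => // x; exact: En.
have [E1 [E2 [[E1b E2b] E12 E1n E2E E_ker]]] := nilpotent_split Eb En.
have gC x : iter n.+1 E (C x) = 0.
  by rewrite iterSr EC (lin0 (proj1 (bounded_op_iter n Eb))).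
have -> : (fun x => C x + E x) = (fun x => (C x + E1 x) + E2 x).
  by apply: funext => x; rewrite E12 addrA.
apply: square_zero_similar_to_contraction => //.
- exact: bounded_op_add.
- by apply: IH => // x; case: (E_ker _ (gC x)) => ->.
- by move=> x; case: (E2E x).
- by move=> x; rewrite (linD (proj1 E2b)) (E_ker _ (gC x)).2 (E2E x).1 addr0.
Qed.

End InnerProduct.

Unset Implicit Arguments.

Theorem corollary3p4 (R : realType) (H : completeNormedModType R[i])
    (ip : H -> H -> R[i]) (C E : H -> H) :
  is_hilbert_inner_product ip ->
  bounded_op C -> similar_to_contraction C ->
  bounded_op E -> nilpotent_op E ->
  (forall x : H, E (C x) = 0) ->
  similar_to_contraction (fun x : H => C x + E x).
Proof.
move=> hip Cb C_sim Eb [[|n] En] EC.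
  by apply: (nilpotent_similar_to_contraction (n := 0) hip) => // x; exact: En (E x).
exact: (nilpotent_similar_to_contraction hip Cb C_sim Eb En EC).
Qed.
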